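(* Let $G=(V,E)$ be a graph with $n$ vertices, $m$ edges and maximum degree $\Delta$. The deterministic variant of Procedure Edge-Coloring with parameter $h\le\log\Delta$ computes a proper $(\Delta+3\cdot2^h)$-edge-coloring of $G$ in $O\left(\frac{m\Delta\log n}{2^h}\right)$ time.
   Context: Logarithms are base 2. A proper $k$-edge-coloring is a map $\varphi:E\to\{1,\dots,k\}$ with distinct colors on distinct edges sharing an endpoint. A degree-splitting of $H$ with discrepancy $\kappa$ is a partition $(E_1,E_2)$ of $E(H)$ with $|\deg_{E_1}(v)-\deg_{E_2}(v)|\le\kappa$ for all $v$. Procedure Edge-Coloring$(H,h)$: if $h=0$, return a proper $(\Delta(H)+1)$-edge-coloring of $H$ with palette $\{1,\dots,\Delta(H)+1\}$ computed by a base-case subroutine. Otherwise compute in $O(|E(H)|)$ time a degree-splitting $(E_1,E_2)$ of $H$ with discrepancy at most 2 and $\{|E_1|,|E_2|\}=\{\lfloor |E(H)|/2\rfloor,\lceil |E(H)|/2\rceil\}$; let $H_1=(V(H),E_1)$, $H_2=(V(H),E_2)$ with isolated vertices discarded; compute $\varphi_1=$ Edge-Coloring$(H_1,h-1)$, $\varphi_2=$ Edge-Coloring$(H_2,h-1)$; return $\varphi=\varphi_1$ on $E_1$ and $\varphi=p_1+\varphi_2$ on $E_2$, where $p_1$ is the palette size of $\varphi_1$. Deterministic variant: the base-case subroutine is a deterministic algorithm computing a proper $(\Delta'+1)$-edge-coloring of a graph with $n'$ vertices, $m'$ edges and maximum degree $\Delta'$ in $O(m'\Delta'\log n')$ time.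 *)

From mathcomp Require Import all_boot.
From Stdlib Require Import Reals.

Set Implicit Arguments.
Unset Strict Implicit.
Unset Printing Implicit Defensive.

Definition log2 (x : R) : R := (ln x / ln 2)%R.

Section Graphs.
Variable V : finType.

Definition graph_on (W : {set V}) (E : {set {set V}}) : Prop :=
  forall e, e \in E -> #|e| = 2 /\ e \subset W.

Definition deg (E : {set {set V}}) (v : V) : nat := #|[set e in E | v \in e]|.

Definition maxdeg (E : {set {set V}}) : nat := \max_(v : V) deg E v.

Definition nonisolated (E : {set {set V}}) : {set V} := [set v | 0 < deg E v].

Definition proper_edge_coloring (E : {set {set V}}) (k : nat)
    (phi : {set V} -> nat) : Prop :=
  (forall e, e \in E -> 1 <= phi e <= k) /\
  (forall e f, e \in E -> f \in E -> e != f -> e :&: f != set0 ->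
     phi e != phi f).

(* Procedure Edge-Coloring(H, h), parameterized by the deterministic
   subroutines:
   - split W E  : the edge set E1 of the degree-splitting (E2 := E :\: E1),
   - splitCost W E : its running time,
   - base W E   : the base-case coloring,
   - baseCost W E : its running time.
   Returns (coloring, palette size, running time).  The running time of a
   recursive call is the cost of the splitting, plus |E(H)| for assembling
   phi from phi1 and phi2, plus the costs of the two recursive calls. *)
Fixpoint edge_coloring
    (split : {set V} -> {set {set V}} -> {set {set V}})
    (splitCost : {set V} -> {set {set V}} -> nat)
    (base : {set V} -> {set {set V}} -> ({set V} -> nat))
    (baseCost : {set V} -> {set {set V}} -> nat)
    (h : nat) (W : {set V}) (E : {set {set V}})
    : (({set V} -> nat) * nat * nat) :=
  match h with
  | 0 => (base W E, (maxdeg E).+1, baseCost W E)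
  | h'.+1 =>
      let E1 := split W E in
      let E2 := E :\: E1 in
      let: (c1, p1, t1) :=
         edge_coloring split splitCost base baseCost h' (nonisolated E1) E1 in
      let: (c2, p2, t2) :=
         edge_coloring split splitCost base baseCost h' (nonisolated E2) E2 in
      ((fun e => if e \in E1 then c1 e else p1 + c2 e),
       p1 + p2,
       splitCost W E + #|E| + t1 + t2)
  end.

End Graphs.

(** Each level of the recursion splits the edges with discrepancy at most 2,
    so the maximum degree evolves as [D -> (D + 2) / 2]: the excess [D - 2]
    is halved.  Induction on [h] then shows that the [2 ^ h] leaves receive
    palettes of total size at most [D + 3 * 2 ^ h], and that the base-case
    work, multiplied by [2 ^ h], stays bounded by [m (D + 2 * 2 ^ h - 2) log n],
    while every level costs [O(m)].  When [h <= log D] we have [2 ^ h <= D],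
    which gives the [O(m D log n / 2 ^ h)] bound. *)

From mathcomp Require Import all_boot zify.
From Stdlib Require Import Reals Lra Psatz.

Set Implicit Arguments.
Unset Strict Implicit.
Unset Printing Implicit Defensive.

Section RealBounds.
Local Open Scope R_scope.

Lemma ln_nonpos x : x <= 0 -> ln x = 0.
Proof. by rewrite /ln; case: Rlt_dec => // x_gt0 /(Rlt_not_le _ _ x_gt0). Qed.

Lemma ln2_gt0 : 0 < ln 2.
Proof. by rewrite -ln_1; apply: ln_increasing; lra. Qed.

Lemma ln_le x y : 0 < x -> x <= y -> ln x <= ln y.
Proof. by move=> x_gt0 [/(ln_increasing _ _ x_gt0)/Rlt_le | ->]; last exact: Rle_refl. Qed.

Lemma log2_INR_ge0 n : 0 <= log2 (INR n).
Proof.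
rewrite /log2; apply: Rmult_le_pos; last exact/Rlt_le/Rinv_0_lt_compat/ln2_gt0.
case: n => [|n]; first by rewrite ln_nonpos //=; lra.
rewrite -ln_1; apply: ln_le; first lra.
by rewrite S_INR; have := pos_INR n; lra.
Qed.

Lemma log2_INR_le (m n : nat) : (m <= n)%nat -> log2 (INR m) <= log2 (INR n).
Proof.
case: m => [|m] le_mn; first by rewrite /log2 ln_nonpos /= ?Rdiv_0_l; [exact: log2_INR_ge0 | lra].
apply: Rmult_le_compat_r; first exact/Rlt_le/Rinv_0_lt_compat/ln2_gt0.
apply: ln_le; first exact/lt_0_INR/ltP.
exact/le_INR/leP.
Qed.

Lemma pow2_le_of_le_log2 (h : nat) x : (0 < h)%nat -> INR h <= log2 x -> 2 ^ h <= x.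
Proof.
move=> h_gt0 le_h; have ln2 := ln2_gt0.
have h_ln : INR h * ln 2 <= ln x.
  have := Rmult_le_compat_r _ _ _ (Rlt_le _ _ ln2) le_h.
  by rewrite /log2 /Rdiv Rmult_assoc Rinv_l ?Rmult_1_r //; lra.
have ln_x_gt0 : 0 < ln x.
  by apply: Rlt_le_trans h_ln; apply: Rmult_lt_0_compat => //; exact/lt_0_INR/ltP.
have x_gt0 : 0 < x.
  by apply: Rnot_le_lt => /ln_nonpos ln_x0; lra.
rewrite -ln_pow in h_ln; last lra.
apply: Rnot_lt_le => /(ln_increasing _ _ x_gt0); lra.
Qed.

Lemma pow2_bounds_of_le_log2 (h d : nat) :
  INR h <= log2 (INR d) -> INR h * 2 ^ h <= log2 (INR d) * INR d /\ 2 ^ h <= INR d + 1.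
Proof.
case: h => [|h] le_h.
  have := log2_INR_ge0 d; have := pos_INR d; rewrite /=; nra.
have pow_le := pow2_le_of_le_log2 (ltn0Sn h) le_h.
split; last lra.
apply: Rmult_le_compat => //; [exact: pos_INR | by apply/Rlt_le/pow_lt; lra].
Qed.

(* [2 ^ h] times the cost of depth [h] on [m] edges of maximum degree [d], when a
   splitting costs [A m] and a base call [B m d]: each of the [h] levels costs
   [(A + 1) m], and the leaves have maximum degree at most [(d - 2) / 2 ^ h + 2]. *)
Definition time_budget (A B : R) (h : nat) (m d : R) : R :=
  (A + 1) * m * INR h * 2 ^ h + B * m * (d + 2 * 2 ^ h - 2).

Lemma time_budget_step A B h D s m1 m2 d1 d2 t1 t2 :
  0 <= B -> 0 <= m1 -> 0 <= m2 ->
  s <= A * (m1 + m2) -> 2 * d1 <= D + 2 -> 2 * d2 <= D + 2 ->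
  t1 * 2 ^ h <= time_budget A B h m1 d1 -> t2 * 2 ^ h <= time_budget A B h m2 d2 ->
  (s + (m1 + m2) + t1 + t2) * 2 ^ h.+1 <= time_budget A B h.+1 (m1 + m2) D.
Proof.
rewrite /time_budget S_INR /=; move=> B0 m10 m20 hs hd1 hd2 ht1 ht2.
have P0 : 0 < 2 ^ h by apply: pow_lt; lra.
have := Rmult_le_compat_l _ _ _ (Rmult_le_pos _ _ B0 m10) hd1.
have := Rmult_le_compat_l _ _ _ (Rmult_le_pos _ _ B0 m20) hd2.
have := Rmult_le_compat_l _ _ _ (Rlt_le _ _ P0) hs.
nra.
Qed.

Lemma time_budget_le A B L h m D t :
  0 <= A -> 0 <= B -> 0 <= L -> 0 <= m ->
  INR h * 2 ^ h <= L * D -> 2 ^ h <= D + 1 ->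
  t * 2 ^ h <= time_budget A (B * L) h m D ->
  t <= (A + 1 + 3 * B) * (m * D * L / 2 ^ h).
Proof.
rewrite /time_budget => A0 B0 L0 m0 hP PD ht.
have P0 : 0 < 2 ^ h by apply: pow_lt; lra.
have A1m0 : 0 <= (A + 1) * m by apply: Rmult_le_pos => //; lra.
have := Rmult_le_compat_l _ _ _ A1m0 hP.
have : B * L * m * (D + 2 * 2 ^ h - 2) <= B * L * m * (3 * D).
  apply: Rmult_le_compat_l; last lra.
  by apply: Rmult_le_pos => //; apply: Rmult_le_pos.
move=> h1 h2; apply: (Rmult_le_reg_r (2 ^ h)) => //.
have -> : (A + 1 + 3 * B) * (m * D * L / 2 ^ h) * 2 ^ h = (A + 1 + 3 * B) * (m * D * L).
  by field; lra.
nra.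
Qed.

End RealBounds.

Section Degrees.
Variable V : finType.
Implicit Types (W : {set V}) (E : {set {set V}}).

Lemma deg_setD E E1 v : E1 \subset E -> deg E1 v + deg (E :\: E1) v = deg E v.
Proof.
move=> sub; rewrite /deg -(cardsID E1 [set e in E | v \in e]).
congr (_ + _); apply: eq_card => e; rewrite !inE.
  by case eE1: (e \in E1); rewrite ?(subsetP sub e eE1) ?andbF ?andbT //= andbC.
by case: (e \in E1); rewrite //= andbC.
Qed.

Lemma maxdeg_split k E E1 E2 :
  (forall v, deg E1 v + deg E2 v <= deg E v) ->
  (forall v, deg E1 v <= deg E2 v + k) ->
  2 * maxdeg E1 <= maxdeg E + k.
Proof.
move=> le_sum le_disc; suff : maxdeg E1 <= (maxdeg E + k)./2 by lia.
apply/bigmax_leqP => v _; have le_max : deg E v <= maxdeg E := leq_bigmax v.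
by have := le_sum v; have := le_disc v; lia.
Qed.

Lemma graph_on_nonisolated W E E' :
  graph_on W E -> E' \subset E -> graph_on (nonisolated E') E'.
Proof.
move=> gE sub e eE'; have [e2 _] := gE e (subsetP sub e eE').
split => //; apply/subsetP => v ve; rewrite inE /deg card_gt0.
by apply/set0Pn; exists e; rewrite inE eE' ve.
Qed.

Lemma maxdeg_le_card W E : graph_on W E -> maxdeg E <= #|V|.
Proof.
move=> gE; apply/bigmax_leqP => v _; rewrite -cardsT.
apply: leq_trans (leq_imset_card (fun u => [set v; u]) [set: V]).
apply: subset_leq_card; apply/subsetP => e; rewrite inE => /andP [eE ve].
have [/eqP/cards2P [x [y [_ e_xy]]] _] := gE e eE.
move: ve; rewrite e_xy !inE => /orP [] /eqP ->; apply/imsetP.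
  by exists y.
by exists x; rewrite // setUC.
Qed.

Lemma proper_edge_coloring_le E k k' phi :
  k <= k' -> proper_edge_coloring E k phi -> proper_edge_coloring E k' phi.
Proof.
move=> le_k [range distinct]; split => // e /range.
by case/andP => -> /leq_trans ->.
Qed.

Lemma proper_edge_coloring_glue E E1 p1 p2 c1 c2 :
  proper_edge_coloring E1 p1 c1 -> proper_edge_coloring (E :\: E1) p2 c2 ->
  proper_edge_coloring E (p1 + p2) (fun e => if e \in E1 then c1 e else p1 + c2 e).
Proof.
move=> [range1 distinct1] [range2 distinct2].
have inD e : e \in E -> e \notin E1 -> e \in E :\: E1 by rewrite inE => -> ->.
split=> [e eE | e f eE fE ef meet].
  by case: ifP => [/range1 | /negbT/(inD e eE)/range2]; lia.
case: ifP => eE1; case: ifP => fE1.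
- exact: distinct1.
- by have := range1 e eE1; have := range2 f (inD f fE (negbT fE1)); lia.
- by have := range1 f fE1; have := range2 e (inD e eE (negbT eE1)); lia.
- have := distinct2 e f (inD e eE (negbT eE1)) (inD f fE (negbT fE1)) ef meet.
  by apply: contra => /eqP; lia.
Qed.

End Degrees.

Section EdgeColoring.
Variable V : finType.
Variable split : {set V} -> {set {set V}} -> {set {set V}}.
Variable splitCost : {set V} -> {set {set V}} -> nat.
Variable base : {set V} -> {set {set V}} -> ({set V} -> nat).
Variable baseCost : {set V} -> {set {set V}} -> nat.
Implicit Types (W : {set V}) (E : {set {set V}}).

Local Notation ec := (edge_coloring split splitCost base baseCost).

Lemma edge_coloringS h W E :
  ec h.+1 W E =
  (let E1 := split W E in
   let r1 := ec h (nonisolated E1) E1 in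
   let r2 := ec h (nonisolated (E :\: E1)) (E :\: E1) in
   ((fun e => if e \in E1 then r1.1.1 e else r1.1.2 + r2.1.1 e),
    r1.1.2 + r2.1.2,
    splitCost W E + #|E| + r1.2 + r2.2)).
Proof. by rewrite /=; case: (ec h _ (split W E)) => [[]]; case: (ec h _ _) => [[]]. Qed.

Hypothesis split_sub : forall W E, graph_on W E -> split W E \subset E.
Hypothesis split_discrepancy : forall W E, graph_on W E -> forall v,
  deg (split W E) v <= deg (E :\: split W E) v + 2 /\
  deg (E :\: split W E) v <= deg (split W E) v + 2.

Lemma maxdeg_split_halves W E : graph_on W E ->
  2 * maxdeg (split W E) <= maxdeg E + 2 /\
  2 * maxdeg (E :\: split W E) <= maxdeg E + 2.
Proof.
move=> gE; have sum_deg v := deg_setD v (split_sub gE).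
split.
- apply: (maxdeg_split (E2 := E :\: split W E)) => v; first by rewrite sum_deg.
  by case: (split_discrepancy gE v).
- apply: (maxdeg_split (E2 := split W E)) => v; first by rewrite addnC sum_deg.
  by case: (split_discrepancy gE v).
Qed.

(* The slack [+ 2] is what makes the bound inductive, since the halves have
   maximum degree up to [(D + 2) / 2]. *)
Lemma edge_coloring_palette h W E : graph_on W E ->
  (ec h W E).1.2 + 2 <= maxdeg E + 3 * 2 ^ h.
Proof.
elim: h W E => [|h IH] W E gE; first by rewrite /=; lia.
rewrite edge_coloringS /=.
have [le1 le2] := maxdeg_split_halves gE.
have := IH _ _ (graph_on_nonisolated gE (split_sub gE)).
have := IH _ _ (graph_on_nonisolated gE (subsetDl E (split W E))).
lia.
Qed.

Hypothesis base_proper : forall W E, graph_on W E ->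
  proper_edge_coloring E (maxdeg E).+1 (base W E).

Lemma edge_coloring_proper h W E : graph_on W E ->
  proper_edge_coloring E (ec h W E).1.2 (ec h W E).1.1.
Proof.
elim: h W E => [|h IH] W E gE; first exact: base_proper.
rewrite edge_coloringS /=; apply: proper_edge_coloring_glue; apply: IH.
- exact: graph_on_nonisolated gE (split_sub gE).
- exact: graph_on_nonisolated gE (subsetDl E (split W E)).
Qed.

Variables a b : R.
Hypothesis split_cost : forall W E, graph_on W E -> (INR (splitCost W E) <= a * INR #|E|)%R.
Hypothesis base_cost : forall W E, graph_on W E ->
  (INR (baseCost W E) <= b * (INR #|E| * INR (maxdeg E) * log2 (INR #|W|)))%R.

Local Notation L := (log2 (INR #|V|)).

Lemma base_cost_abs W E : graph_on W E ->
  (INR (baseCost W E) <= Rabs b * L * INR #|E| * INR (maxdeg E))%R.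
Proof.
move=> gE; apply: Rle_trans (base_cost gE) _.
have md0 := Rmult_le_pos _ _ (pos_INR #|E|) (pos_INR (maxdeg E)).
have X0 := Rmult_le_pos _ _ md0 (log2_INR_ge0 #|W|).
have := Rmult_le_compat_l _ _ _ md0 (log2_INR_le (max_card W)).
have := Rmult_le_compat_r _ _ _ X0 (Rle_abs b).
have := Rabs_pos b; nra.
Qed.

Lemma edge_coloring_time h W E : graph_on W E ->
  (INR (ec h W E).2 * 2 ^ h <=
   time_budget (Rabs a) (Rabs b * L) h (INR #|E|) (INR (maxdeg E)))%R.
Proof.
elim: h W E => [|h IH] W E gE.
  by have := base_cost_abs gE; rewrite /time_budget /=; lra.
rewrite edge_coloringS /=.
have [le1 le2] := maxdeg_split_halves gE.
set E1 := split W E in le1 le2 *; set E2 := E :\: E1 in le2 *.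
have cardE : INR #|E| = (INR #|E1| + INR #|E2|)%R.
  by rewrite -plus_INR -(cardsID E1 E) (setIidPr (split_sub gE)).
have s_le : (INR (splitCost W E) <= Rabs a * (INR #|E1| + INR #|E2|))%R.
  rewrite -cardE; apply: Rle_trans (split_cost gE) _.
  exact/Rmult_le_compat_r/Rle_abs/pos_INR.
rewrite !plus_INR cardE.
apply: time_budget_step s_le _ _ (IH _ _ _) (IH _ _ _).
- exact/Rmult_le_pos/log2_INR_ge0/Rabs_pos.
- exact: pos_INR.
- exact: pos_INR.
- by move/leP/le_INR: le1; rewrite mult_INR plus_INR /=; lra.
- by move/leP/le_INR: le2; rewrite mult_INR plus_INR /=; lra.
- exact: graph_on_nonisolated gE (split_sub gE).
- exact: graph_on_nonisolated gE (subsetDl E E1).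
Qed.

End EdgeColoring.

Theorem corollary3p9 :
  exists C : R -> R -> R,
  forall (V : finType)
    (split : {set V} -> {set {set V}} -> {set {set V}})
    (splitCost : {set V} -> {set {set V}} -> nat)
    (base : {set V} -> {set {set V}} -> ({set V} -> nat))
    (baseCost : {set V} -> {set {set V}} -> nat)
    (a b : R),
  (* degree-splitting subroutine: discrepancy <= 2, balanced sizes *)
  (forall W E, graph_on W E ->
     split W E \subset E /\
     (forall v, deg (split W E) v <= deg (E :\: split W E) v + 2 /\
                deg (E :\: split W E) v <= deg (split W E) v + 2) /\
     (#|split W E| = #|E| %/ 2 \/ #|split W E| = #|E| %/ 2 + #|E| %% 2)) ->
  (* ... running in O(|E(H)|) time *)
  (forall W E, graph_on W E -> (INR (splitCost W E) <= a * INR #|E|)%R) ->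
  (* base case: proper (Delta'+1)-edge-coloring with palette {1..Delta'+1} *)
  (forall W E, graph_on W E ->
     proper_edge_coloring E (maxdeg E).+1 (base W E)) ->
  (* ... in O(m' Delta' log n') time, n' = number of vertices *)
  (forall W E, graph_on W E ->
     (INR (baseCost W E) <=
        b * (INR #|E| * INR (maxdeg E) * log2 (INR #|W|)))%R) ->
  forall (E : {set {set V}}) (h : nat),
  graph_on [set: V] E ->
  (INR h <= log2 (INR (maxdeg E)))%R ->
  let res := edge_coloring split splitCost base baseCost h [set: V] E in
  proper_edge_coloring E (maxdeg E + 3 * 2 ^ h) res.1.1 /\
  (INR res.2 <=
     C a b * (INR #|E| * INR (maxdeg E) * log2 (INR #|V|) / 2 ^ h))%R.
Proof.
exists (fun a b => Rabs a + 1 + 3 * Rabs b)%R.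
move=> V split splitCost base baseCost a b split_ok split_cost base_ok base_cost
  E h gE le_h res.
have split_sub W E' (gE' : graph_on W E') := (split_ok W E' gE').1.
have split_disc W E' (gE' : graph_on W E') := (split_ok W E' gE').2.1.
split.
  apply: proper_edge_coloring_le (edge_coloring_proper _ _ _ _ h gE) => //.
  by have := edge_coloring_palette splitCost base baseCost split_sub split_disc h gE; lia.
have [hP PD] := pow2_bounds_of_le_log2 le_h.
have le_log : (log2 (INR (maxdeg E)) <= log2 (INR #|V|))%R.
  exact/log2_INR_le/maxdeg_le_card/gE.
apply: time_budget_le (edge_coloring_time base split_sub split_disc split_cost base_cost h gE).
- by have := Rabs_pos a; lra.
- exact: Rabs_pos.
- exact: log2_INR_ge0.
- exact: pos_INR.
- by apply: Rle_trans hP _; apply/Rmult_le_compat_r/le_log/pos_INR.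
- exact: PD.
Qed.
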